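(* Let $P$ be an lqCCS process and let $\Sigma,\Sigma'$ be sets of quantum names. If $\Sigma \vdash P$ and $\Sigma' \vdash P$, then $\Sigma = \Sigma'$.
   Context: Fix denumerable sets $\mathcal{Q}$ of qubit names, of variables, and of channels; variables and channels are typed, with value types $\mathcal{Q}$ (qubits), $\mathbb{N}$, $\mathbb{B}$ and channel types $\mathrm{Ch}(\mathcal{Q}),\mathrm{Ch}(\mathbb{N}),\mathrm{Ch}(\mathbb{B})$. lqCCS processes are generated by $P ::= K \mid P \parallel P \mid P\setminus c \mid \mathsf{if}\ e\ \mathsf{then}\ P\ \mathsf{else}\ P$, $K ::= \mathbf{0}_{\tilde e} \mid \tau.P \mid \mathcal{E}(\tilde e).P \mid M(\tilde e \rhd x).P \mid c?x.P \mid c!e \mid K+K$, $e ::= x \mid b \mid n \mid q \mid \neg e \mid e\lor e \mid e\le e$, where $b\in\mathbb{B}$, $n\in\mathbb{N}$, $q\in\mathcal{Q}$, $x$ a variable, $c$ a channel, and $\tilde e$ a (possibly empty) tuple of expressions. $\mathcal{E}$ ranges over trace-preserving superoperators on $n$ qubits (written $\mathcal{E}:\mathrm{Op}(n)$) and $M$ over quantum measurements $\{M_0,\dots,M_{k-1}\}$ on $n$ qubits (written $M:\mathrm{Meas}(n)$). Expressions of types $\mathbb{N},\mathbb{B}$ are typed in the standard way. Typing judgments have the form $\Sigma\vdash P$ where $\Sigma$ is a set of quantum names (qubit names and variables of type $\mathcal{Q}$). For a set $A$, $\tilde A$ denotes the set of tuples in which every element of $A$ occurs exactly once. The typing rules are: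 (Nil) $\Sigma\vdash \mathbf{0}_{\tilde e}$ if $\tilde e\in\tilde\Sigma$; (Tau) $\Sigma\vdash\tau.P$ if $\Sigma\vdash P$; (QMeas) $\Sigma\vdash M(\tilde e\rhd y).P$ if $M:\mathrm{Meas}(n)$, $S\subseteq\Sigma$, $|S|=n$, $\tilde e\in\tilde S$, $y:\mathbb{N}$, $\Sigma\vdash P$; (QOp) $\Sigma\vdash\mathcal{E}(\tilde e).P$ if $\mathcal{E}:\mathrm{Op}(n)$, $S\subseteq\Sigma$, $|S|=n$, $\tilde e\in\tilde S$, $\Sigma\vdash P$; (Restrict) $\Sigma\vdash P\setminus c$ if $\Sigma\vdash P$; (Sum) $\Sigma\vdash P+Q$ if $\Sigma\vdash P$ and $\Sigma\vdash Q$; (CRecv) $\Sigma\vdash c?x.P$ if $c:\mathrm{Ch}(T)$, $x:T$ with $T\in\{\mathbb{B},\mathbb{N}\}$, $\Sigma\vdash P$; (QRecv) $\Sigma\vdash c?x.P$ if $c:\mathrm{Ch}(\mathcal{Q})$, $x:\mathcal{Q}$, $\Sigma\cup\{x\}\vdash P$; (QSend) $\{e\}\vdash c!e$ if $c:\mathrm{Ch}(\mathcal{Q})$, $e:\mathcal{Q}$; (CSend) $\emptyset\vdash c!e$ if $c:\mathrm{Ch}(T)$, $e:T$ with $T\in\{\mathbb{B},\mathbb{N}\}$; (ITE) $\Sigma\vdash\mathsf{if}\ e\ \mathsf{then}\ P_1\ \mathsf{else}\ P_2$ if $e:\mathbb{B}$, $\Sigma\vdash P_1$, $\Sigma\vdash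 P_2$; (Par) $\Sigma_1\cup\Sigma_2\vdash P_1\parallel P_2$ if $\Sigma_1\cap\Sigma_2=\emptyset$, $\Sigma_1\vdash P_1$, $\Sigma_2\vdash P_2$.
   Formalization: In the typing rule (QRecv), deriving Σ ⊢ c?x.P requires, besides Σ ∪ {x} ⊢ P, that x ∉ Σ, so the received name x is fresh for Σ. The statement above fails without it. *)

From Stdlib Require Import List.
Import ListNotations.

Inductive vtype := TQ | TNat | TBool.

Definition qubit := nat.

(* variables and channels are typed: each carries its (value / channel
   payload) type together with an index, giving a denumerable set of each type *)
Record var := mkVar { vty : vtype; vid : nat }.
Record chan := mkChan { chty : vtype; chid : nat }.

Inductive expr :=
| EVar (x : var)
| EBool (b : bool)
| ENat (n : nat)
| EQubit (q : qubit)
| ENeg (e : expr)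
| EOr (e1 e2 : expr)
| ELe (e1 e2 : expr).

Inductive etype : expr -> vtype -> Prop :=
| ET_var x : etype (EVar x) (vty x)
| ET_bool b : etype (EBool b) TBool
| ET_nat n : etype (ENat n) TNat
| ET_qubit q : etype (EQubit q) TQ
| ET_neg e : etype e TBool -> etype (ENeg e) TBool
| ET_or e1 e2 : etype e1 TBool -> etype e2 TBool -> etype (EOr e1 e2) TBool
| ET_le e1 e2 : etype e1 TNat -> etype e2 TNat -> etype (ELe e1 e2) TBool.

(* quantum names: qubit names and variables of type Q
   (QV n stands for the variable mkVar TQ n) *)
Inductive qname := QQ (q : qubit) | QV (n : nat).

Definition qexpr (e : expr) : option qname :=
  match e with
  | EVar x => match vty x with TQ => Some (QV (vid x)) | _ => None end
  | EQubit q => Some (QQ q)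
  | _ => None
  end.

Definition qvar (x : var) : qname := QV (vid x).

Definition qset := qname -> Prop.
Definition qempty : qset := fun _ => False.
Definition qsingle (a : qname) : qset := fun b => b = a.
Definition qunion (A B : qset) : qset := fun b => A b \/ B b.
Definition qsubset (A B : qset) : Prop := forall b, A b -> B b.
Definition qdisjoint (A B : qset) : Prop := forall b, A b -> B b -> False.

Definition qcard (S : qset) (n : nat) : Prop :=
  exists l : list qname, NoDup l /\ (forall a, In a l <-> S a) /\ length l = n.

(* es \in \tilde S : es is a tuple of (expressions denoting) quantum names in
   which every element of S occurs exactly once (and nothing else occurs) *)
Definition tuple_in (S : qset) (es : list expr) : Prop :=
  exists l : list qname,
    map qexpr es = map Some l /\ NoDup l /\ (forall a, In a l <-> S a).

(* Processes. The superoperators E : Op(n) and measurements M : Meas(n) on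
   n qubits are drawn from arbitrary families of types Op n, Meas n (only
   their arity n matters for typing). *)
Section Syntax.
Variables (Op Meas : nat -> Type).

Inductive proc :=
| PK (k : kproc)
| PPar (p1 p2 : proc)
| PRes (p : proc) (c : chan)
| PIf (e : expr) (p1 p2 : proc)
with kproc :=
| KNil (es : list expr)
| KTau (p : proc)
| KOp (n : nat) (E : Op n) (es : list expr) (p : proc)
| KMeas (n : nat) (M : Meas n) (es : list expr) (x : var) (p : proc)
| KRecv (c : chan) (x : var) (p : proc)
| KSend (c : chan) (e : expr)
| KSum (k1 k2 : kproc).

Inductive typ : qset -> proc -> Prop :=
| T_K S k : ktyp S k -> typ S (PK k)
| T_Par S1 S2 p1 p2 :
    qdisjoint S1 S2 -> typ S1 p1 -> typ S2 p2 -> typ (qunion S1 S2) (PPar p1 p2)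
| T_Res S p c : typ S p -> typ S (PRes p c)
| T_If S e p1 p2 :
    etype e TBool -> typ S p1 -> typ S p2 -> typ S (PIf e p1 p2)
with ktyp : qset -> kproc -> Prop :=
| T_Nil S es : tuple_in S es -> ktyp S (KNil es)
| T_Tau S p : typ S p -> ktyp S (KTau p)
| T_QMeas S n (M : Meas n) es y p (T : qset) :
    qsubset T S -> qcard T n -> tuple_in T es -> vty y = TNat ->
    typ S p -> ktyp S (KMeas n M es y p)
| T_QOp S n (E : Op n) es p (T : qset) :
    qsubset T S -> qcard T n -> tuple_in T es ->
    typ S p -> ktyp S (KOp n E es p)
| T_Sum S k1 k2 : ktyp S k1 -> ktyp S k2 -> ktyp S (KSum k1 k2)
| T_CRecv S c x p :
    (chty c = TBool \/ chty c = TNat) -> vty x = chty c ->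
    typ S p -> ktyp S (KRecv c x p)
| T_QRecv S c x p :
    chty c = TQ -> vty x = TQ -> ~ S (qvar x) ->
    typ (qunion S (qsingle (qvar x))) p -> ktyp S (KRecv c x p)
| T_QSend c e a :
    chty c = TQ -> etype e TQ -> qexpr e = Some a ->
    ktyp (qsingle a) (KSend c e)
| T_CSend c e :
    (chty c = TBool \/ chty c = TNat) -> etype e (chty c) ->
    ktyp qempty (KSend c e).

End Syntax.

Arguments PK {Op Meas}.
Arguments PPar {Op Meas}.
Arguments PRes {Op Meas}.
Arguments PIf {Op Meas}.

(* Typing is syntax-directed (the channel type separates the classical and
   quantum send/receive rules), so two derivations for the same process use the
   same rules, and every rule determines Sigma from its premises: a tuple lists
   each name of its set exactly once, a quantum send is typed by the name it
   sends, the parallel rule is a congruence for union, and the name bound by a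
   quantum receive is fresh, so it can be cancelled from Sigma u {x}. *)

From Stdlib Require Import List FunctionalExtensionality PropExtensionality.

Scheme typ_mut := Induction for typ Sort Prop
with ktyp_mut := Induction for ktyp Sort Prop.

Lemma qset_ext (A B : qset) : (forall a, A a <-> B a) -> A = B.
Proof.
  intros AB; apply functional_extensionality; intros a.
  apply propositional_extensionality, AB.
Qed.

Lemma qunion_single_cancel (A B : qset) (a : qname) :
  ~ A a -> ~ B a -> qunion A (qsingle a) = qunion B (qsingle a) -> A = B.
Proof.
  intros nAa nBa AB; apply qset_ext; intros b.
  assert (ABb : qunion A (qsingle a) b <-> qunion B (qsingle a) b)
    by (rewrite AB; reflexivity).
  unfold qunion, qsingle in ABb.
  split; intros Hb; assert (b <> a) by (intros ->; contradiction); tauto.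
Qed.

Lemma map_injective {X Y : Type} (f : X -> Y) (l l' : list X) :
  (forall x y, f x = f y -> x = y) -> map f l = map f l' -> l = l'.
Proof.
  intros f_inj; revert l'.
  induction l as [|x l IH]; intros [|x' l'] E; simpl in E; try discriminate.
  - reflexivity.
  - injection E as Ex El; f_equal; auto.
Qed.

Lemma tuple_in_unique (S S' : qset) (es : list expr) :
  tuple_in S es -> tuple_in S' es -> S = S'.
Proof.
  intros [l [El [_ Sl]]] [l' [El' [_ Sl']]].
  assert (l = l') as <-.
  { apply (map_injective Some); [congruence | now rewrite <- El, El']. }
  apply qset_ext; intros a; rewrite <- Sl, Sl'; reflexivity.
Qed.

Lemma quantum_chan_not_classical (c : chan) :
  chty c = TQ -> ~ (chty c = TBool \/ chty c = TNat).
Proof. intros -> [E | E]; discriminate. Qed.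

Lemma typ_unique (Op Meas : nat -> Type) (S : qset) (p : proc Op Meas) :
  typ Op Meas S p -> forall S', typ Op Meas S' p -> S = S'.
Proof.
  intros Hp.
  induction Hp using typ_mut with
    (P0 := fun S k _ => forall S', ktyp Op Meas S' k -> S = S');
    intros S' H'; inversion H'; subst;
    try solve [ auto
              | eapply tuple_in_unique; eauto
              | exfalso; eapply quantum_chan_not_classical; eauto ].
  - f_equal; auto.
  - eapply qunion_single_cancel; eauto.
  - congruence.
Qed.

Theorem proposition3p1 (Op Meas : nat -> Type) (P : proc Op Meas)
  (Sigma Sigma' : qset) :
  typ Op Meas Sigma P -> typ Op Meas Sigma' P -> Sigma = Sigma'.
Proof.
  intros H; exact (typ_unique Op Meas Sigma P H Sigma').
Qed.
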